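(* Consider the Maxwell--Bloch system \[ \dot A=B,\quad \dot B=-\Omega^2A-\sigma B+cj(t),\quad i\hbar\dot C_1=\hbar\omega_1C_1+ia(t)C_2,\quad i\hbar\dot C_2=\hbar\omega_2C_2-ia(t)C_1,\qquad t>0, \] with $j(t)=2q\,\mathrm{Im}[\overline{C_1(t)}C_2(t)]$, $a(t)=\frac qc[A(t)+A_p(t)]$, where $A_p\in C[0,\infty)$ is real-valued. Then there exist constants $d_1,d_2,\gamma>0$ such that every solution with $|C_1(t)|^2+|C_2(t)|^2=1$ satisfies \[ |A(t)|^2+|B(t)|^2\le d_1\big(|A(0)|^2+|B(0)|^2\big)e^{-\gamma t}+d_2,\qquad t>0. \]
   Context: Parameters: $\Omega>0$, $\sigma>0$, $c>0$, $\hbar>0$, real $\omega_2>\omega_1$, $p>0$, $\omega=\omega_2-\omega_1$, $q=\omega p$. Unknowns: $A(t),B(t)\in\mathbb R$, $C_1(t),C_2(t)\in\mathbb C$. *)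

From Stdlib Require Import Reals.
From Coquelicot Require Import Coquelicot.
Open Scope R_scope.

Definition cont_nonneg (f : R -> R) : Prop :=
  forall t, 0 <= t -> filterlim f (within (fun x => 0 <= x) (locally t)) (locally (f t)).

(** (A,B,C1,C2) is a solution on t > 0 of the Maxwell--Bloch system, with
    A, B continuous up to t = 0 (so that A(0), B(0) are the initial data). *)
Definition MB_solution (Om sigma c hbar w1 w2 p : R) (Ap : R -> R)
    (A B : R -> R) (C1 C2 : R -> C) : Prop :=
  let q := (w2 - w1) * p in
  let j := fun t => 2 * q * Im (Cconj (C1 t) * C2 t) in
  let a := fun t => q / c * (A t + Ap t) in
  (forall t, 0 < t ->
     is_derive A t (B t) /\
     is_derive B t (- Om ^ 2 * A t - sigma * B t + c * j t) /\
     (exists dC1 dC2 : C,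
        is_derive C1 t dC1 /\ is_derive C2 t dC2 /\
        (Ci * RtoC hbar * dC1 = RtoC (hbar * w1) * C1 t + Ci * RtoC (a t) * C2 t)%C /\
        (Ci * RtoC hbar * dC2 = RtoC (hbar * w2) * C2 t - Ci * RtoC (a t) * C1 t)%C)) /\
  filterlim A (at_right 0) (locally (A 0)) /\
  filterlim B (at_right 0) (locally (B 0)).

From Stdlib Require Import Reals Lra Psatz.
From Coquelicot Require Import Coquelicot.
Open Scope R_scope.

(* Only the equations for A and B matter.  The normalisation
   |C1|^2 + |C2|^2 = 1 gives |j| <= q, so A is a damped oscillator
   A'' + sigma A' + Om^2 A = c j driven by a force bounded by c q, whatever
   C1, C2 and A_p do.  The quadratic form
   V = B^2 + sigma A B + (Om^2 + sigma^2/2) A^2 is equivalent to A^2 + B^2 and,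
   along solutions, satisfies V' <= - gamma V + K; the comparison principle
   then gives V(t) <= (V(0) - K/gamma) e^(-gamma t) + K/gamma. *)

Lemma filterlim_Rplus {T : Type} {F : (T -> Prop) -> Prop} {FF : Filter F}
    (f g : T -> R) (a b : R) :
  filterlim f F (locally a) -> filterlim g F (locally b) ->
  filterlim (fun x => f x + g x) F (locally (a + b)).
Proof.
  intros Hf Hg. apply (filterlim_comp_2 f g Rplus Hf Hg).
  apply (filterlim_plus (V := R_NormedModule)).
Qed.

Lemma filterlim_Rmult {T : Type} {F : (T -> Prop) -> Prop} {FF : Filter F}
    (f g : T -> R) (a b : R) :
  filterlim f F (locally a) -> filterlim g F (locally b) ->
  filterlim (fun x => f x * g x) F (locally (a * b)).
Proof.
  intros Hf Hg. apply (filterlim_comp_2 f g Rmult Hf Hg).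
  apply (filterlim_mult (K := R_AbsRing)).
Qed.

Lemma antitone_of_derive_nonpos (W dW : R -> R) (a s t : R) :
  (forall x, a < x -> is_derive W x (dW x)) ->
  (forall x, a < x -> dW x <= 0) ->
  a < s <= t -> W t <= W s.
Proof.
  intros HW Hneg Hst.
  destruct (MVT_gen W s t dW) as [x [Hx Hmvt]].
  - intros x Hx. apply HW. rewrite Rmin_left in Hx; lra.
  - intros x Hx. apply continuity_pt_filterlim, (ex_derive_continuous W).
    exists (dW x). apply HW. rewrite Rmin_left in Hx; lra.
  - rewrite Rmin_left in Hx by lra.
    pose proof (Hneg x ltac:(lra)). nra.
Qed.

Lemma diff_ineq_exp_bound (V dV : R -> R) (g K V0 t : R) :
  0 < g ->
  (forall x, 0 < x -> is_derive V x (dV x)) ->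
  (forall x, 0 < x -> dV x <= - g * V x + K) ->
  filterlim V (at_right 0) (locally V0) -> 0 < t ->
  V t <= (V0 - K / g) * exp (- g * t) + K / g.
Proof.
  intros Hg HV Hineq HV0 Ht.
  set (W := fun x => (V x - K / g) * exp (g * x)).
  assert (HW : forall x, 0 < x -> is_derive W x ((dV x + g * V x - K) * exp (g * x))).
  { intros x Hx. unfold W. auto_derive.
    - exists (dV x). now apply HV.
    - replace (Derive (fun y => V y) x) with (dV x)
        by (symmetry; apply is_derive_unique, HV, Hx).
      field. lra. }
  assert (Hanti : forall s, 0 < s <= t -> W t <= W s).
  { intros s Hs. apply (antitone_of_derive_nonpos W _ 0 s t HW); [|lra].
    intros x Hx. pose proof (Hineq x Hx). pose proof (exp_pos (g * x)). nra. }
  assert (Hexp : filterlim (fun x => exp (g * x)) (at_right 0) (locally 1)).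
  { replace 1 with (exp (g * 0)) by (rewrite Rmult_0_r; apply exp_0).
    eapply filterlim_filter_le_1; [apply filter_le_within|].
    apply continuous_exp_comp, (ex_derive_continuous (fun x => g * x)).
    auto_derive. easy. }
  assert (HW0 : filterlim W (at_right 0) (locally ((V0 - K / g) * 1))).
  { apply filterlim_Rmult; [|exact Hexp].
    apply filterlim_Rplus; [exact HV0 | apply filterlim_const]. }
  assert (Hlim : W t <= (V0 - K / g) * 1).
  { apply (closed_filterlim_loc W (fun y => W t <= y) _ HW0); [|apply closed_ge].
    exists (mkposreal t Ht). intros s Hs Hpos.
    apply Hanti. split; [exact Hpos|].
    apply Rabs_lt_between in Hs. unfold minus, plus, opp in Hs; simpl in Hs. lra. }
  replace (V t) with (W t * exp (- g * t) + K / g).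
  - pose proof (exp_pos (- g * t)). nra.
  - unfold W. rewrite Rmult_assoc, <- exp_plus.
    replace (g * t + - g * t) with 0 by ring. rewrite exp_0. ring.
Qed.

Definition osc_lyapunov (sigma Om a b : R) : R :=
  b * b + sigma * a * b + (Om ^ 2 + sigma ^ 2 / 2) * a * a.

Definition osc_lyapunov_rate (sigma Om f a b : R) : R :=
  let db := - Om ^ 2 * a - sigma * b + f in
  2 * b * db + sigma * (b * b + a * db) + 2 * (Om ^ 2 + sigma ^ 2 / 2) * a * b.

Section DampedOscillator.

Variables sigma Om : R.
Hypothesis sigma_pos : 0 < sigma.
Hypothesis Om_pos : 0 < Om.

Lemma osc_lyapunov_lower (a b : R) :
  a ^ 2 + b ^ 2 <= (2 + 1 / Om ^ 2) * osc_lyapunov sigma Om a b.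
Proof.
  unfold osc_lyapunov.
  replace ((2 + 1 / Om ^ 2) * (b * b + sigma * a * b + (Om ^ 2 + sigma ^ 2 / 2) * a * a))
    with (a ^ 2 + b ^ 2 + (b + sigma * a) ^ 2 + 2 * Om ^ 2 * a ^ 2 + (sigma * a / Om) ^ 2 / 4
          + (b + sigma * a / 2) ^ 2 / Om ^ 2) by (field; lra).
  assert (0 <= (b + sigma * a / 2) ^ 2 / Om ^ 2).
  { apply Rdiv_le_0_compat; [apply pow2_ge_0 | nra]. }
  pose proof (pow2_ge_0 (b + sigma * a)). pose proof (pow2_ge_0 (sigma * a / Om)). nra.
Qed.

Lemma osc_lyapunov_upper (a b : R) :
  osc_lyapunov sigma Om a b <= (2 + Om ^ 2 + sigma ^ 2) * (a ^ 2 + b ^ 2).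
Proof. unfold osc_lyapunov. nra. Qed.

Lemma osc_lyapunov_le_energy (a b : R) :
  osc_lyapunov sigma Om a b <= (2 + sigma ^ 2 / Om ^ 2) * (b ^ 2 + Om ^ 2 * a ^ 2).
Proof.
  unfold osc_lyapunov.
  replace ((2 + sigma ^ 2 / Om ^ 2) * (b ^ 2 + Om ^ 2 * a ^ 2)) with
    (2 * b ^ 2 + (sigma / Om) ^ 2 * b ^ 2 + 2 * Om ^ 2 * a ^ 2 + sigma ^ 2 * a ^ 2)
    by (field; lra).
  nra.
Qed.

Lemma is_derive_osc_lyapunov (A B : R -> R) (f x : R) :
  is_derive A x (B x) -> is_derive B x (- Om ^ 2 * A x - sigma * B x + f) ->
  is_derive (fun y => osc_lyapunov sigma Om (A y) (B y)) x
    (osc_lyapunov_rate sigma Om f (A x) (B x)).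
Proof.
  intros HA HB. unfold osc_lyapunov, osc_lyapunov_rate. auto_derive.
  - repeat split; eexists; eassumption.
  - replace (Derive (fun y => A y) x) with (B x) by (symmetry; now apply is_derive_unique).
    replace (Derive (fun y => B y) x) with (- Om ^ 2 * A x - sigma * B x + f)
      by (symmetry; now apply is_derive_unique).
    field.
Qed.

(* The damping dissipates [sigma (b^2 + Om^2 a^2)]; Young's inequality spends
   half of it to absorb the forcing terms [2 b f + sigma a f]. *)
Lemma osc_lyapunov_rate_le_energy (f a b : R) :
  osc_lyapunov_rate sigma Om f a b <=
    - (sigma / 2) * (b ^ 2 + Om ^ 2 * a ^ 2) + f ^ 2 * (2 / sigma + sigma / (2 * Om ^ 2)).
Proof.
  unfold osc_lyapunov_rate.
  assert (Hyoung_b : 2 * b * f <= sigma / 2 * b ^ 2 + 2 * f ^ 2 / sigma).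
  { replace (sigma / 2 * b ^ 2 + 2 * f ^ 2 / sigma)
      with (2 * b * f + (sigma * b - 2 * f) ^ 2 / (2 * sigma)) by (field; lra).
    assert (0 <= (sigma * b - 2 * f) ^ 2 / (2 * sigma)).
    { apply Rdiv_le_0_compat; [apply pow2_ge_0 | lra]. }
    lra. }
  assert (Hyoung_a :
    sigma * a * f <= sigma * Om ^ 2 / 2 * a ^ 2 + sigma * f ^ 2 / (2 * Om ^ 2)).
  { replace (sigma * Om ^ 2 / 2 * a ^ 2 + sigma * f ^ 2 / (2 * Om ^ 2))
      with (sigma * a * f + sigma * (Om ^ 2 * a - f) ^ 2 / (2 * Om ^ 2)) by (field; lra).
    assert (0 <= sigma * (Om ^ 2 * a - f) ^ 2 / (2 * Om ^ 2)).
    { apply Rdiv_le_0_compat; [pose proof (pow2_ge_0 (Om ^ 2 * a - f)); nra | nra]. }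
    lra. }
  replace (f ^ 2 * (2 / sigma + sigma / (2 * Om ^ 2)))
    with (2 * f ^ 2 / sigma + sigma * f ^ 2 / (2 * Om ^ 2)) by (field; lra).
  nra.
Qed.

Definition osc_decay_rate : R := sigma / (2 * (2 + sigma ^ 2 / Om ^ 2)).
Definition osc_forcing_gain : R := 2 / sigma + sigma / (2 * Om ^ 2).

Lemma osc_decay_rate_pos : 0 < osc_decay_rate.
Proof.
  unfold osc_decay_rate. apply Rdiv_lt_0_compat; [lra|].
  assert (0 <= sigma ^ 2 / Om ^ 2) by (apply Rdiv_le_0_compat; nra). lra.
Qed.

Lemma osc_forcing_gain_pos : 0 < osc_forcing_gain.
Proof.
  unfold osc_forcing_gain.
  assert (0 < 2 / sigma) by (apply Rdiv_lt_0_compat; lra).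
  assert (0 < sigma / (2 * Om ^ 2)) by (apply Rdiv_lt_0_compat; nra). lra.
Qed.

Lemma osc_lyapunov_rate_le (F f a b : R) : f ^ 2 <= F ^ 2 ->
  osc_lyapunov_rate sigma Om f a b <=
    - osc_decay_rate * osc_lyapunov sigma Om a b + F ^ 2 * osc_forcing_gain.
Proof.
  intros Hf.
  pose proof (osc_lyapunov_rate_le_energy f a b) as Hrate.
  pose proof (osc_lyapunov_le_energy a b) as Henergy.
  pose proof osc_forcing_gain_pos.
  assert (HM : 0 < 2 + sigma ^ 2 / Om ^ 2).
  { assert (0 <= sigma ^ 2 / Om ^ 2) by (apply Rdiv_le_0_compat; nra). lra. }
  assert (osc_decay_rate * osc_lyapunov sigma Om a b <= sigma / 2 * (b ^ 2 + Om ^ 2 * a ^ 2)).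
  { unfold osc_decay_rate.
    replace (sigma / 2 * (b ^ 2 + Om ^ 2 * a ^ 2)) with
      (sigma / (2 * (2 + sigma ^ 2 / Om ^ 2))
       * ((2 + sigma ^ 2 / Om ^ 2) * (b ^ 2 + Om ^ 2 * a ^ 2)))
      by (field; split; nra).
    apply Rmult_le_compat_l; [left; apply osc_decay_rate_pos | exact Henergy]. }
  unfold osc_forcing_gain in *. nra.
Qed.

Lemma forced_osc_bound (F : R) (A B f : R -> R) (t : R) :
  (forall x, 0 < x ->
     is_derive A x (B x) /\ is_derive B x (- Om ^ 2 * A x - sigma * B x + f x)) ->
  (forall x, 0 < x -> f x ^ 2 <= F ^ 2) ->
  filterlim A (at_right 0) (locally (A 0)) ->
  filterlim B (at_right 0) (locally (B 0)) ->
  0 < t ->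
  A t ^ 2 + B t ^ 2 <=
    (2 + 1 / Om ^ 2) * (2 + Om ^ 2 + sigma ^ 2) * (A 0 ^ 2 + B 0 ^ 2)
      * exp (- osc_decay_rate * t)
    + (2 + 1 / Om ^ 2) * (F ^ 2 * osc_forcing_gain / osc_decay_rate).
Proof.
  intros Hode Hf HA0 HB0 Ht.
  set (g := osc_decay_rate). set (K := F ^ 2 * osc_forcing_gain).
  assert (Hg : 0 < g) by apply osc_decay_rate_pos.
  assert (HKg : 0 <= K / g).
  { apply Rdiv_le_0_compat; [|exact Hg].
    pose proof osc_forcing_gain_pos. pose proof (pow2_ge_0 F). unfold K. nra. }
  set (V := fun x => osc_lyapunov sigma Om (A x) (B x)).
  assert (HV0 : filterlim V (at_right 0) (locally (V 0))).
  { unfold V, osc_lyapunov.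
    repeat first [apply filterlim_Rplus | apply filterlim_Rmult | assumption
                 | apply filterlim_const]. }
  assert (Hdecay : V t <= (V 0 - K / g) * exp (- g * t) + K / g).
  { apply (diff_ineq_exp_bound V (fun x => osc_lyapunov_rate sigma Om (f x) (A x) (B x)));
      try assumption.
    - intros x Hx. destruct (Hode x Hx) as [HA HB].
      apply is_derive_osc_lyapunov; assumption.
    - intros x Hx. apply osc_lyapunov_rate_le, Hf, Hx. }
  pose proof (osc_lyapunov_lower (A t) (B t)) as Hlower.
  pose proof (osc_lyapunov_upper (A 0) (B 0)) as Hupper.
  fold (V t) in Hlower. fold (V 0) in Hupper.
  assert (HL : 0 < 2 + 1 / Om ^ 2).
  { assert (0 <= 1 / Om ^ 2) by (apply Rdiv_le_0_compat; nra). lra. }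
  pose proof (exp_pos (- g * t)).
  assert (V t <= (2 + Om ^ 2 + sigma ^ 2) * (A 0 ^ 2 + B 0 ^ 2) * exp (- g * t) + K / g)
    by nra.
  nra.
Qed.

End DampedOscillator.

Lemma sqr_Im_conj_mul_le (z w : C) :
  (2 * Im (Cconj z * w)) ^ 2 <= (Cmod z ^ 2 + Cmod w ^ 2) ^ 2.
Proof.
  assert (Him : Im (Cconj z * w) ^ 2 <= (Cmod z * Cmod w) ^ 2).
  { rewrite <- Cmod_conj with z, <- Cmod_mult, Cmod2_alt.
    pose proof (pow2_ge_0 (Re (Cconj z * w))). lra. }
  pose proof (pow2_ge_0 (Cmod z ^ 2 - Cmod w ^ 2)). nra.
Qed.

Theorem corollary2p2 (Om sigma c hbar w1 w2 p : R) (Ap : R -> R) :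
  0 < Om -> 0 < sigma -> 0 < c -> 0 < hbar -> w1 < w2 -> 0 < p ->
  cont_nonneg Ap ->
  exists d1 d2 gamma : R, 0 < d1 /\ 0 < d2 /\ 0 < gamma /\
    forall (A B : R -> R) (C1 C2 : R -> C),
      MB_solution Om sigma c hbar w1 w2 p Ap A B C1 C2 ->
      (forall t, 0 <= t -> Cmod (C1 t) ^ 2 + Cmod (C2 t) ^ 2 = 1) ->
      forall t, 0 < t ->
        Rabs (A t) ^ 2 + Rabs (B t) ^ 2 <=
          d1 * (Rabs (A 0) ^ 2 + Rabs (B 0) ^ 2) * exp (- gamma * t) + d2.
Proof.
  intros HOm Hsigma Hc _ Hw Hp _.
  set (q := (w2 - w1) * p).
  assert (Hq : 0 < q) by (apply Rmult_lt_0_compat; lra).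
  pose proof (osc_decay_rate_pos sigma Om Hsigma HOm) as Hgamma.
  pose proof (osc_forcing_gain_pos sigma Om Hsigma HOm) as Hgain.
  assert (HL : 0 < 2 + 1 / Om ^ 2).
  { assert (0 <= 1 / Om ^ 2) by (apply Rdiv_le_0_compat; nra). lra. }
  exists ((2 + 1 / Om ^ 2) * (2 + Om ^ 2 + sigma ^ 2)),
    ((2 + 1 / Om ^ 2) * ((c * q) ^ 2 * osc_forcing_gain sigma Om / osc_decay_rate sigma Om)),
    (osc_decay_rate sigma Om).
  split; [nra|]. split.
  { apply Rmult_lt_0_compat; [exact HL|]. apply Rdiv_lt_0_compat; [|exact Hgamma].
    apply Rmult_lt_0_compat; [|exact Hgain]. apply pow_lt. nra. }
  split; [exact Hgamma|].
  intros A B C1 C2 [Hode [HA0 HB0]] Hnorm t Ht.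
  rewrite !pow2_abs.
  apply (forced_osc_bound sigma Om Hsigma HOm (c * q) A B
           (fun x => c * (2 * q * Im (Cconj (C1 x) * C2 x)))); try assumption.
  - intros x Hx. destruct (Hode x Hx) as [HA [HB _]]. split; assumption.
  - intros x Hx.
    pose proof (sqr_Im_conj_mul_le (C1 x) (C2 x)) as Hj.
    rewrite Hnorm in Hj by lra.
    replace ((c * (2 * q * Im (Cconj (C1 x) * C2 x))) ^ 2)
      with ((c * q) ^ 2 * (2 * Im (Cconj (C1 x) * C2 x)) ^ 2) by ring.
    pose proof (pow2_ge_0 (c * q)). nra.
Qed.
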